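(* Let $P$ be a finite point set in general position. Every cut vertex of $G_\bigtriangledown(P)$ lies on the boundary of the outer (unbounded) face of the straight-line plane embedding of $G_\bigtriangledown(P)$.
   Context: A finite point set $P$ in the plane is in general position if no line through two points of $P$ makes an angle of $0^\circ$, $60^\circ$ or $120^\circ$ with the horizontal. A down-triangle is an equilateral triangle with one side parallel to the $x$-axis and the corner opposite to this side below that side. $G_\bigtriangledown(P)$ is the graph with vertex set $P$ in which $p,q$ are adjacent iff some (closed) down-triangle contains $p$ and $q$ and no other point of $P$. Drawing each edge $pq$ as the straight segment $pq$ gives a plane embedding of $G_\bigtriangledown(P)$. *)

From Stdlib Require Import Reals List Relations.
Open Scope R_scope.

Definition point := (R * R)%type.

(* General position: no line through two distinct points of P makes an
   angle of 0, 60 or 120 degrees with the horizontal. *)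
Definition general_position (P : list point) : Prop :=
  forall p q, In p P -> In q P -> p <> q ->
    snd q - snd p <> 0 /\
    snd q - snd p <> sqrt 3 * (fst q - fst p) /\
    snd q - snd p <> - sqrt 3 * (fst q - fst p).

(* Closed down-triangle with bottom apex (ax, ay) and height h > 0:
   horizontal top side at y = ay + h, the two other sides of slope +-sqrt 3
   through the apex.  This is an equilateral triangle of side 2h/sqrt 3. *)
Definition in_down_triangle (ax ay h : R) (z : point) : Prop :=
  snd z <= ay + h /\ sqrt 3 * Rabs (fst z - ax) <= snd z - ay.

Definition tri_edge (P : list point) (p q : point) : Prop :=
  In p P /\ In q P /\ p <> q /\
  exists ax ay h, 0 < h /\
    in_down_triangle ax ay h p /\ in_down_triangle ax ay h q /\
    forall r, In r P -> in_down_triangle ax ay h r -> r = p \/ r = q.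

Definition tri_edge_minus (P : list point) (v p q : point) : Prop :=
  tri_edge P p q /\ p <> v /\ q <> v.

Definition cut_vertex (P : list point) (v : point) : Prop :=
  In v P /\
  exists u w, In u P /\ In w P /\ u <> v /\ w <> v /\
    clos_refl_trans point (tri_edge P) u w /\
    ~ clos_refl_trans point (tri_edge_minus P v) u w.

Definition on_segment (p q z : point) : Prop :=
  exists t, 0 <= t <= 1 /\
    fst z = fst p + t * (fst q - fst p) /\ snd z = snd p + t * (snd q - snd p).

Definition drawing (P : list point) (z : point) : Prop :=
  In z P \/ exists p q, tri_edge P p q /\ on_segment p q z.

Definition sqdist (a b : point) : R :=
  (fst a - fst b) ^ 2 + (snd a - snd b) ^ 2.

(* z lies in the outer (unbounded) face: z is off the drawing and the path
   component of z in the complement of the drawing is unbounded, i.e. z can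
   be joined by a continuous curve avoiding the drawing to points arbitrarily
   far away. *)
Definition in_outer_face (P : list point) (z : point) : Prop :=
  ~ drawing P z /\
  forall M : R, exists fx fy : R -> R,
    continuity fx /\ continuity fy /\
    fx 0 = fst z /\ fy 0 = snd z /\
    (forall t, 0 <= t <= 1 -> ~ drawing P (fx t, fy t)) /\
    M < (fx 1) ^ 2 + (fy 1) ^ 2.

(* z lies on the boundary of the outer face: z is in its closure (it is never
   in the open face itself when z is a vertex). *)
Definition on_outer_boundary (P : list point) (z : point) : Prop :=
  ~ in_outer_face P z /\
  forall eps, 0 < eps -> exists y, in_outer_face P y /\ sqdist y z < eps.

From Stdlib Require Import Reals List Relations Lra Lia Classical Arith.
Open Scope R_scope.

(* Measure points by the three "triangular coordinates"
   coord X1 = y - sqrt 3 x, coord X2 = y + sqrt 3 x, coord X3 = -2 y, which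
   sum to zero; a down-triangle is exactly a region {z | c i <= coord i z}
   (with c X1 + c X2 + c X3 < 0), and general position says that distinct
   points of P differ in every coordinate.
   1. For p, q in P let hull p q be the smallest down-triangle containing
      them.  If v is not in hull p q, then p and q are connected in G - v:
      either hull p q holds no other point (pq is an edge) or a point r in it
      splits it into two strictly smaller hulls (induction on point count).
   2. Hence if the two "lower cones" {coord i >= coord i v, coord X3 >=
      coord X3 v} (i = X1, X2) at v both contain points of P, every point of
      P - v is connected in G - v, so v is not a cut vertex.
   3. If one lower cone is empty, the ray from v along which both of its
      coordinates grow avoids the drawing (a crossed edge triangle would have
      to contain v), and as this ray goes downward to infinity, v lies on the
      boundary of the outer face. *)

Local Notation conn P v := (clos_refl_trans point (tri_edge_minus P v)).

Lemma s3_pos : 0 < sqrt 3.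
Proof. apply sqrt_lt_R0; lra. Qed.

Lemma s3_sq : sqrt 3 * sqrt 3 = 3.
Proof. apply sqrt_sqrt; lra. Qed.

Lemma convex_comb_ge a b K l : 0 <= l <= 1 -> K <= a -> K <= b -> K <= a + l * (b - a).
Proof. intros Hl Ha Hb. nra. Qed.

Lemma convex_comb_lt a b K l : 0 <= l <= 1 -> a < K -> b < K -> a + l * (b - a) < K.
Proof.
  intros Hl Ha Hb. destruct (Rle_lt_or_eq_dec l 1 (proj2 Hl)) as [Hl1 | ->]; [|lra].
  assert (0 < (1 - l) * (K - a)) by (apply Rmult_lt_0_compat; lra).
  assert (0 <= l * (K - b)) by (apply Rmult_le_pos; lra). nra.
Qed.

Lemma convex_escape a_p a_q a_v b_p b_q b_v l : 0 <= l <= 1 ->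
  (a_p < a_v \/ b_p < b_v) -> (a_q < a_v \/ b_q < b_v) ->
  b_v < b_p + l * (b_q - b_p) -> a_p < a_v \/ a_q < a_v.
Proof.
  intros Hl [Hp|Hp] [Hq|Hq] Hz; auto.
  exfalso. pose proof (convex_comb_lt b_p b_q b_v l Hl Hp Hq). lra.
Qed.

Inductive axis := X1 | X2 | X3.

Definition coord (i : axis) (z : point) : R :=
  match i with
  | X1 => snd z - sqrt 3 * fst z
  | X2 => snd z + sqrt 3 * fst z
  | X3 => -2 * snd z
  end.

Lemma coord_sum z : coord X1 z + coord X2 z + coord X3 z = 0.
Proof. simpl; ring. Qed.

(* A point is determined by its coordinates, and no point dominates another
   in all three coordinates since they sum to zero. *)
Lemma coord_le_eq p q : (forall i, coord i p <= coord i q) -> p = q.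
Proof.
  destruct p as [px py], q as [qx qy]; intros H.
  pose proof (H X1); pose proof (H X2); pose proof (H X3).
  pose proof (coord_sum (px, py)); pose proof (coord_sum (qx, qy)).
  simpl in *. pose proof s3_pos.
  assert (Ey : py = qy) by lra.
  assert (Ex : sqrt 3 * (px - qx) = 0) by lra.
  apply Rmult_integral in Ex as [Ex|Ex]; [lra|]. f_equal; lra.
Qed.

Lemma gp_coord P p q i : general_position P -> In p P -> In q P -> p <> q ->
  coord i p <> coord i q.
Proof.
  intros G Hp Hq Hpq. destruct (G p q Hp Hq Hpq) as [A [B C]].
  destruct i; simpl; intro E; [apply B | apply C | apply A]; lra.
Qed.

Definition ray (v d : point) (t : R) : point := (fst v + t * fst d, snd v + t * snd d).

Lemma coord_ray i v d t : coord i (ray v d t) = coord i v + t * coord i d.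
Proof. destruct i; simpl; ring. Qed.

Lemma coord_segment p q z : on_segment p q z ->
  exists l, 0 <= l <= 1 /\ forall i, coord i z = coord i p + l * (coord i q - coord i p).
Proof.
  intros [l [Hl [Hx Hy]]]. exists l; split; auto.
  intro i; destruct i; simpl; rewrite ?Hx, ?Hy; ring.
Qed.

Lemma positive_axes i j m d : i <> j -> 0 < coord i d -> 0 < coord j d ->
  0 < coord m d -> m = i \/ m = j.
Proof.
  intros Hij Hi Hj Hm. pose proof (coord_sum d).
  destruct i, j, m; auto; try congruence; lra.
Qed.

Definition in_region (c : axis -> R) (z : point) : Prop := forall i, c i <= coord i z.

Definition in_region_dec (c : axis -> R) (z : point) :
  {in_region c z} + {~ in_region c z}.
Proof.
  destruct (Rle_dec (c X1) (coord X1 z)) as [H1|H1];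
  [destruct (Rle_dec (c X2) (coord X2 z)) as [H2|H2];
   [destruct (Rle_dec (c X3) (coord X3 z)) as [H3|H3]|]|].
  - left; intros [| |]; auto.
  - right; intro H; apply H3, H.
  - right; intro H; apply H2, H.
  - right; intro H; apply H1, H.
Defined.

Lemma in_region_ext c c' z : (forall i, c i = c' i) -> in_region c z <-> in_region c' z.
Proof. intros E; split; intros H i; [rewrite <- E | rewrite E]; apply H. Qed.

Lemma scaled_abs_le k a b : 0 < k -> (k * Rabs a <= b <-> k * a <= b /\ - (k * a) <= b).
Proof.
  intros Hk. unfold Rabs; destruct Rcase_abs;
  split; [intros; split; nra | intros [? ?]; nra | intros; split; nra | intros [? ?]; nra].
Qed.

Definition tri_bounds (ax ay h : R) (i : axis) : R :=
  match i with
  | X1 => ay - sqrt 3 * ax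
  | X2 => ay + sqrt 3 * ax
  | X3 => -2 * (ay + h)
  end.

Lemma down_triangle_region ax ay h z :
  in_down_triangle ax ay h z <-> in_region (tri_bounds ax ay h) z.
Proof.
  unfold in_down_triangle. rewrite (scaled_abs_le _ _ _ s3_pos).
  split.
  - intros [A [B C]] i; destruct i; simpl; lra.
  - intros H. pose proof (H X1); pose proof (H X2); pose proof (H X3). simpl in *. lra.
Qed.

Lemma region_is_triangle c : c X1 + c X2 + c X3 < 0 ->
  exists ax ay h, 0 < h /\ forall z, in_down_triangle ax ay h z <-> in_region c z.
Proof.
  intros Hc. pose proof s3_pos.
  exists ((c X2 - c X1) / (2 * sqrt 3)), ((c X1 + c X2) / 2), (- (c X1 + c X2 + c X3) / 2).
  split; [lra|]. intro z. rewrite down_triangle_region.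
  apply in_region_ext. intro i; destruct i; simpl; field; lra.
Qed.

Definition hull (p q : point) (i : axis) : R := Rmin (coord i p) (coord i q).

Lemma hull_l p q : in_region (hull p q) p.
Proof. intro i; apply Rmin_l. Qed.

Lemma hull_r p q : in_region (hull p q) q.
Proof. intro i; apply Rmin_r. Qed.

Lemma hull_comm p q z : in_region (hull p q) z -> in_region (hull q p) z.
Proof. intros H i; unfold hull; rewrite Rmin_comm; apply H. Qed.

Lemma hull_least c p q z : in_region c p -> in_region c q ->
  in_region (hull p q) z -> in_region c z.
Proof.
  intros Hp Hq Hz i. apply Rle_trans with (hull p q i); [apply Rmin_glb; auto | apply Hz].
Qed.

Lemma hull_sum_neg p q : p <> q -> hull p q X1 + hull p q X2 + hull p q X3 < 0.
Proof.
  intros Hpq. destruct (Rlt_dec (hull p q X1 + hull p q X2 + hull p q X3) 0) as [|Hge]; auto.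
  exfalso. apply Hpq, coord_le_eq. unfold hull in Hge.
  pose proof (coord_sum p).
  pose proof (Rmin_l (coord X1 p) (coord X1 q)); pose proof (Rmin_r (coord X1 p) (coord X1 q)).
  pose proof (Rmin_l (coord X2 p) (coord X2 q)); pose proof (Rmin_r (coord X2 p) (coord X2 q)).
  pose proof (Rmin_l (coord X3 p) (coord X3 q)); pose proof (Rmin_r (coord X3 p) (coord X3 q)).
  intro i; destruct i; lra.
Qed.

Lemma empty_hull_edge P p q : In p P -> In q P -> p <> q ->
  (forall r, In r P -> in_region (hull p q) r -> r = p \/ r = q) -> tri_edge P p q.
Proof.
  intros Hp Hq Hpq Hempty.
  destruct (region_is_triangle _ (hull_sum_neg p q Hpq)) as [ax [ay [h [Hh Ht]]]].
  split; [auto | split; [auto | split; [auto |]]].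
  exists ax, ay, h. split; [exact Hh |]. split; [apply Ht, hull_l |].
  split; [apply Ht, hull_r |].
  intros r Hr Hrt. apply Hempty; auto. apply Ht; auto.
Qed.

Lemma hull_excludes_far_end P p q r : general_position P -> In q P -> In r P ->
  r <> q -> in_region (hull p q) r -> ~ in_region (hull p r) q.
Proof.
  intros G Hq Hr Hrq Hr_in Hq_in.
  assert (Hpq : forall i, coord i p <= coord i q).
  { intro i. specialize (Hr_in i); specialize (Hq_in i).
    pose proof (gp_coord P r q i G Hr Hq Hrq).
    unfold hull, Rmin in *; repeat destruct Rle_dec; lra. }
  apply coord_le_eq in Hpq; subst q.
  apply Hrq; symmetry; apply coord_le_eq.
  intro i; specialize (Hr_in i); unfold hull, Rmin in Hr_in; destruct Rle_dec; lra.
Qed.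

(* Number of points of P in a region: the induction measure of step 1. *)
Definition region_count (P : list point) (c : axis -> R) : nat :=
  length (filter (fun z => if in_region_dec c z then true else false) P).

Lemma filter_length_mono {A} (f g : A -> bool) (l : list A) :
  (forall z, In z l -> f z = true -> g z = true) ->
  (length (filter f l) <= length (filter g l))%nat.
Proof.
  induction l as [|a l IH]; simpl; intros H; auto.
  specialize (IH (fun z Hz => H z (or_intror Hz))).
  destruct (f a) eqn:Ef; [rewrite (H a (or_introl eq_refl) Ef); simpl; lia|].
  destruct (g a); simpl; lia.
Qed.

Lemma filter_length_strict {A} (f g : A -> bool) (l : list A) x :
  (forall z, In z l -> f z = true -> g z = true) ->
  In x l -> f x = false -> g x = true ->
  (length (filter f l) < length (filter g l))%nat.
Proof.
  induction l as [|a l IH]; simpl; intros H Hx Hf Hg; [contradiction|].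
  pose proof (filter_length_mono f g l (fun z Hz => H z (or_intror Hz))).
  destruct Hx as [<-|Hx]; [rewrite Hf, Hg; simpl; lia|].
  specialize (IH (fun z Hz => H z (or_intror Hz)) Hx Hf Hg).
  destruct (f a) eqn:Ef; [rewrite (H a (or_introl eq_refl) Ef); simpl; lia|].
  destruct (g a); simpl; lia.
Qed.

Lemma region_count_lt P c c' x : (forall z, in_region c z -> in_region c' z) ->
  In x P -> ~ in_region c x -> in_region c' x ->
  (region_count P c < region_count P c')%nat.
Proof.
  intros Hsub Hx Hc Hc'. apply filter_length_strict with x; [| exact Hx | |].
  - intros z _. destruct (in_region_dec c z), (in_region_dec c' z); auto.
  - destruct (in_region_dec c x); tauto.
  - destruct (in_region_dec c' x); tauto.
Qed.

Lemma connect_outside_hull P v : general_position P ->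
  forall p q, In p P -> In q P -> p <> v -> q <> v ->
  ~ in_region (hull p q) v -> conn P v p q.
Proof.
  intros G p q. remember (region_count P (hull p q)) as n eqn:Hn. revert p q Hn.
  induction n as [n IH] using (well_founded_induction lt_wf).
  intros p q Hn Hp Hq Hpv Hqv Hv.
  destruct (classic (p = q)) as [<-|Hpq]; [apply rt_refl|].
  destruct (classic (exists r, In r P /\ in_region (hull p q) r /\ r <> p /\ r <> q))
    as [[r [Hr [Hr_in [Hrp Hrq]]]] | Hnone].
  - assert (Hrv : r <> v) by (intros ->; contradiction).
    assert (Hsub_l : forall z, in_region (hull p r) z -> in_region (hull p q) z)
      by (intro z; apply (hull_least _ p r z); [apply hull_l | exact Hr_in]).
    assert (Hsub_r : forall z, in_region (hull r q) z -> in_region (hull p q) z)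
      by (intro z; apply (hull_least _ r q z); [exact Hr_in | apply hull_r]).
    apply rt_trans with r.
    + apply (IH (region_count P (hull p r))); auto.
      rewrite Hn. apply region_count_lt with q; auto using hull_r.
      apply (hull_excludes_far_end P); auto.
    + apply (IH (region_count P (hull r q))); auto.
      rewrite Hn. apply region_count_lt with p; auto using hull_l.
      intro Hp_in. apply (hull_excludes_far_end P q p r G Hp Hr Hrp (hull_comm _ _ _ Hr_in)).
      apply hull_comm; auto.
  - apply rt_step. split; [|auto].
    apply empty_hull_edge; auto. intros r Hr Hr_in.
    destruct (classic (r = p)); auto. destruct (classic (r = q)); auto.
    exfalso; apply Hnone; eauto.
Qed.

Lemma above_axis_connect P v i x y : general_position P -> In x P -> In y P ->
  x <> v -> y <> v -> coord i v < coord i x -> coord i v < coord i y -> conn P v x y.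
Proof.
  intros G Hx Hy Hxv Hyv Hix Hiy. apply connect_outside_hull; auto.
  intro Hin; specialize (Hin i); unfold hull, Rmin in Hin; destruct Rle_dec; lra.
Qed.

Lemma some_axis_above x v : x <> v -> exists i, coord i v < coord i x.
Proof.
  intros Hxv. destruct (classic (exists i, coord i v < coord i x)) as [|Hno]; auto.
  exfalso; apply Hxv, coord_le_eq. intro i; apply Rnot_lt_le; intro; apply Hno; eauto.
Qed.

Definition cone_occupied (P : list point) (v : point) (i j : axis) : Prop :=
  exists y, In y P /\ y <> v /\ coord i v <= coord i y /\ coord j v <= coord j y.

Lemma two_cones_connect P v : general_position P -> In v P ->
  cone_occupied P v X2 X3 -> cone_occupied P v X1 X3 ->
  forall x y, In x P -> In y P -> x <> v -> y <> v -> conn P v x y.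
Proof.
  intros G Hv [y1 [H1 [H1v [A2 A3]]]] [y2 [H2 [H2v [B1 B3]]]].
  assert (Hstrict : forall i y, In y P -> y <> v -> coord i v <= coord i y ->
                      coord i v < coord i y).
  { intros i y Hy Hyv Hle. destruct (Rle_lt_or_eq_dec _ _ Hle) as [|E]; auto.
    exfalso; apply (gp_coord P y v i G Hy Hv Hyv); auto. }
  assert (Hto : forall x, In x P -> x <> v -> conn P v x y1 /\ conn P v y1 x).
  { intros x Hx Hxv. destruct (some_axis_above x v Hxv) as [[| |] Hi].
    - split; apply rt_trans with y2.
      + apply (above_axis_connect P v X1); auto.
      + apply (above_axis_connect P v X3); auto.
      + apply (above_axis_connect P v X3); auto.
      + apply (above_axis_connect P v X1); auto.
    - split; apply (above_axis_connect P v X2); auto.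
    - split; apply (above_axis_connect P v X3); auto. }
  intros x y Hx Hy Hxv Hyv. apply rt_trans with y1; [apply Hto | apply Hto]; auto.
Qed.

Lemma ray_avoids_drawing P v i j d : In v P -> i <> j ->
  0 < coord i d -> 0 < coord j d -> ~ cone_occupied P v i j ->
  forall t, 0 < t -> ~ drawing P (ray v d t).
Proof.
  intros Hv Hij Hi Hj Hempty t Ht.
  set (z := ray v d t).
  assert (Hz : forall m, coord m z = coord m v + t * coord m d) by (intro; apply coord_ray).
  assert (Hzi : coord i v < coord i z) by (rewrite Hz; nra).
  assert (Hzj : coord j v < coord j z) by (rewrite Hz; nra).
  assert (Hout : forall y, In y P -> y <> v -> coord i y < coord i v \/ coord j y < coord j v).
  { intros y Hy Hyv. destruct (Rlt_dec (coord i y) (coord i v)); auto.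
    destruct (Rlt_dec (coord j y) (coord j v)); auto.
    exfalso; apply Hempty; exists y; repeat split; auto; lra. }
  intros [Hin | [p [q [[Hp [Hq [Hpq [ax [ay [h [_ [Tp [Tq Honly]]]]]]]]] Hseg]]]].
  { assert (Hzv : z <> v) by (intros E; rewrite E in Hzi; lra).
    destruct (Hout z Hin Hzv); lra. }
  destruct (coord_segment p q z Hseg) as [l [Hl Hzl]].
  rewrite down_triangle_region in Tp, Tq.
  assert (Hpv : p <> v).
  { intros ->. rewrite Hzl in Hzi, Hzj.
    destruct (Hout q Hq (not_eq_sym Hpq)); nra. }
  assert (Hqv : q <> v).
  { intros ->. rewrite Hzl in Hzi, Hzj. destruct (Hout p Hp Hpq); nra. }
  assert (Hbelow : forall a, a = i \/ a = j -> coord a p < coord a v \/ coord a q < coord a v).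
  { intros a [-> | ->].
    - apply (convex_escape _ _ _ (coord j p) (coord j q) (coord j v) l); auto.
      rewrite <- Hzl; auto.
    - apply (convex_escape _ _ _ (coord i p) (coord i q) (coord i v) l); auto.
      + destruct (Hout p Hp Hpv); auto.
      + destruct (Hout q Hq Hqv); auto.
      + rewrite <- Hzl; auto. }
  assert (Hvin : in_region (tri_bounds ax ay h) v).
  { intro m. destruct (Rle_dec (coord m d) 0) as [Hneg|Hpos].
    - assert (tri_bounds ax ay h m <= coord m z)
        by (rewrite Hzl; apply convex_comb_ge; auto).
      rewrite Hz in H. nra.
    - pose proof (Tp m); pose proof (Tq m).
      destruct (Hbelow m (positive_axes i j m d Hij Hi Hj (Rnot_le_lt _ _ Hpos))); lra. }
  apply down_triangle_region in Hvin.
  destruct (Honly v Hv Hvin); congruence.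
Qed.

Lemma ray_in_outer_face P v d t0 : snd d < 0 -> 0 < t0 ->
  (forall t, 0 < t -> ~ drawing P (ray v d t)) -> in_outer_face P (ray v d t0).
Proof.
  intros Hd Ht0 Hfree. split; [apply Hfree; auto|].
  intro M. set (K := (Rabs M + 1 + Rabs (snd v)) / (- snd d)).
  assert (HK : 0 < K) by (unfold K; pose proof (Rabs_pos M);
    pose proof (Rabs_pos (snd v)); apply Rdiv_lt_0_compat; lra).
  exists (fun s => fst (ray v d (t0 + s * K))), (fun s => snd (ray v d (t0 + s * K))).
  unfold ray; simpl. repeat split; [reg | reg | ring | ring | |].
  - intros s Hs. apply Hfree. nra.
  - assert (HKd : K * snd d = - (Rabs M + 1 + Rabs (snd v))) by (unfold K; field; lra).
    assert (Hy : snd v + (t0 + 1 * K) * snd d <= - (Rabs M + 1)).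
    { pose proof (Rle_abs (snd v)). nra. }
    pose proof (Rle_abs M). pose proof (Rabs_pos M).
    pose proof (pow2_ge_0 (fst v + (t0 + 1 * K) * fst d)). nra.
Qed.

Lemma ray_escape_boundary P v d : In v P -> snd d < 0 ->
  (forall t, 0 < t -> ~ drawing P (ray v d t)) -> on_outer_boundary P v.
Proof.
  intros Hv Hd Hfree. split; [intros [Hoff _]; apply Hoff; left; exact Hv|].
  intros eps Heps. set (n := fst d ^ 2 + snd d ^ 2).
  assert (Hn : 0 <= n) by (unfold n; pose proof (pow2_ge_0 (fst d)); pose proof (pow2_ge_0 (snd d)); lra).
  set (t0 := Rmin 1 (eps / (1 + n))).
  assert (Hpos : 0 < eps / (1 + n)) by (apply Rdiv_lt_0_compat; lra).
  assert (Ht0 : 0 < t0) by (apply Rmin_glb_lt; lra).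
  assert (Ht1 : t0 <= 1) by apply Rmin_l.
  assert (Hte : t0 * (1 + n) <= eps).
  { assert (t0 <= eps / (1 + n)) by apply Rmin_r.
    replace eps with (eps / (1 + n) * (1 + n)) by (field; lra). nra. }
  exists (ray v d t0). split; [apply ray_in_outer_face; auto|].
  unfold sqdist, ray; simpl.
  replace ((fst v + t0 * fst d - fst v) * ((fst v + t0 * fst d - fst v) * 1) +
           (snd v + t0 * snd d - snd v) * ((snd v + t0 * snd d - snd v) * 1))
    with (t0 * t0 * n) by (unfold n; ring).
  nra.
Qed.

Definition dir13 : point := (- sqrt 3 / 2, -1/2).
Definition dir23 : point := (sqrt 3 / 2, -1/2).

Lemma dir13_coords : coord X1 dir13 = 1 /\ coord X3 dir13 = 1.
Proof. pose proof s3_sq; simpl; split; lra. Qed.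

Lemma dir23_coords : coord X2 dir23 = 1 /\ coord X3 dir23 = 1.
Proof. pose proof s3_sq; simpl; split; lra. Qed.

Theorem corollary1 (P : list point) :
  NoDup P -> general_position P ->
  forall v, cut_vertex P v -> on_outer_boundary P v.
Proof.
  intros _ G v [Hv [u [w [Hu [Hw [Huv [Hwv [_ Hsep]]]]]]]].
  destruct (classic (cone_occupied P v X2 X3)) as [C23 | N23].
  - destruct (classic (cone_occupied P v X1 X3)) as [C13 | N13].
    + exfalso; apply Hsep, (two_cones_connect P v); auto.
    + destruct dir13_coords as [E1 E3].
      apply (ray_escape_boundary P v dir13); [auto | simpl; lra |].
      apply (ray_avoids_drawing P v X1 X3); auto; [discriminate | lra | lra].
  - destruct dir23_coords as [E2 E3].
    apply (ray_escape_boundary P v dir23); [auto | simpl; lra |].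
    apply (ray_avoids_drawing P v X2 X3); auto; [discriminate | lra | lra].
Qed.
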